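(* Suppose that $\theta\in(0,1]$, $M>1$, $T>1$, $n\ge 2M$ and $f\in\mathrm{PL}_n^2\cap G_M^2$. Then for any $k\in\{\lceil\sqrt n\rceil,\dots,\lfloor\theta n\rfloor-1\}$, \[\sum_{j=k}^{\lfloor\theta n\rfloor-1}\mathcal E^+_X(I_j,\Gamma_{M,T}(f,n),T)\ge\int_{k/n}^{\lfloor\theta n\rfloor/n}\Big(\sqrt{2R^*_X(f(s))}-\sqrt{f_X'(s)}\Big)^2ds-O\Big(\frac{M^4}{n^{1/4}}+\frac{M^3n}{T^{1/2}}\Big).\]
   Context: $O(a)$ denotes a quantity bounded in absolute value by $Ca$ for a universal constant $C$. Let $R(x,y)=\frac{x+1}{y+1}\vee\frac{y+1}{x+1}$, $P(x,y)=\frac{y+1}{2(x+1)}\mathbb 1_{x\ge y}+\big(1-\frac{x+1}{2(y+1)}\big)\mathbb 1_{x<y}$, $R_X=RP$, $R_Y=R(1-P)$. $R^*(x,y)=\frac xy\vee\frac yx$ if $x>0$ or $y>0$, $R^*(0,0)=1$; $P^*(x,y)=\frac y{2x}\mathbb 1_{x\ge y}+(1-\frac x{2y})\mathbb 1_{x<y}$ if $x>0$ or $y>0$, $P^*(0,0)=1/2$; $R^*_X=R^*P^*$ if $y>0$, $R^*_X(x,0)=1/2$. $\|\cdot\|$ is the max norm on $\mathbb R^2$. $E$ is the set of non-decreasing càdlàg $f:[0,1]\to\mathbb R$ with $f(0)=0$ ($f'(s):=\infty$ where not differentiable), with Lévy metric $d(f,g)=\inf\{r>0:f(x-r)-r<g(x)<f(x+r)+r\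 \forall x\in[-r,1+r]\}$ ($f(x)=f(0)$ for $x<0$, $f(1)$ for $x>1$), and on $E^2$ the max of coordinate distances; $f=(f_X,f_Y)$. $G_M=\{f\in E: s/M\le f(s)\le Ms\ \forall s\}$; $G_{M,T}=\{f\in E:s/M-2T^{-2/3}\le f(s)\le M(s+2T^{-2/3})\ \forall s\}$. $\mathrm{PL}_n$ is the set of continuous $f\in E$ linear on each $[i/n,(i+1)/n]$. $I_j=[j/n,(j+1)/n]$. $\Delta_n(f,g)=\max_{0\le i\le n}\|f(i/n)-g(i/n)\|$; $\Gamma_{M,T}(f,n)=B_{\Delta_n}(f,1/n^2)\cap B_d(f,1/n)\cap G_{M,T}^2$ (open balls). For a non-empty interval $I\subset[0,1]$ with infimum $I^-$, supremum $I^+$, length $|I|$, $F\subset E^2$, $T\ge1$: $R^-_X(I,F,T)=\inf\{R_X(Tg(s)):s\in I,g\in F\}$, $R^+_X(I,F,T)$ the corresponding sup; $x^-(s,F)=\inf\{g_X(s):g\in F\}$, $x^+(s,F)=\sup\{g_X(s):g\in F\}$. ''$X-$ case'': $2R^-_X|I|>x^+(I^+,F)-x^-(I^-,F)$; ''$X+$ case'': $x^-(I^+,F)-x^+(I^-,F)>2R^+_X|I|$. $\mathcal E^+_X(I,F,T)=(\sqrt{2R^-_X(I,F,T)|I|}-\sqrt{x^+(I^+,F)-x^-(I^-,F)})^2$ in the $X-$ case, $(\sqrt{2R^+_X(I,F,T)|I|}-\sqrt{x^-(I^+,F)-x^+(I^-,F)})^2$ in the $X+$ case, $0$ otherwise.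 *)

From Stdlib Require Import Reals Lra Lia List.
From Coquelicot Require Import Coquelicot.
Import ListNotations.
Open Scope R_scope.

Definition flr (x : R) : nat := Z.to_nat (Int_part x).
Definition cel (x : R) : nat := Z.to_nat (- Int_part (- x)).

Definition Rr (x y : R) : R := Rmax ((x + 1) / (y + 1)) ((y + 1) / (x + 1)).
Definition Pp (x y : R) : R :=
  if Rle_dec y x then (y + 1) / (2 * (x + 1)) else 1 - (x + 1) / (2 * (y + 1)).
Definition RX (x y : R) : R := Rr x y * Pp x y.

Definition Rstar (x y : R) : R :=
  if Rlt_dec 0 x then Rmax (x / y) (y / x)
  else if Rlt_dec 0 y then Rmax (x / y) (y / x) else 1.
Definition Pstar (x y : R) : R :=
  if Rlt_dec 0 x then (if Rle_dec y x then y / (2 * x) else 1 - x / (2 * y))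
  else if Rlt_dec 0 y then (if Rle_dec y x then y / (2 * x) else 1 - x / (2 * y))
  else / 2.
Definition RXstar (x y : R) : R :=
  if Req_EM_T y 0 then / 2 else Rstar x y * Pstar x y.

(** The space E: non-decreasing cadlag f : [0,1] -> R with f(0) = 0.
    Functions are represented as R -> R; only their values on [0,1] matter. *)
Definition inE (f : R -> R) : Prop :=
  f 0 = 0 /\
  (forall x y, 0 <= x -> x <= y -> y <= 1 -> f x <= f y) /\
  (forall x, 0 <= x < 1 -> filterlim f (at_right x) (locally (f x))) /\
  (forall x, 0 < x <= 1 -> exists l, filterlim f (at_left x) (locally l)).

Definition ext (f : R -> R) (x : R) : R :=
  if Rlt_dec x 0 then f 0 else if Rlt_dec 1 x then f 1 else f x.

Definition levy (f g : R -> R) : Rbar :=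
  Glb_Rbar (fun r => 0 < r /\
    forall x, - r <= x <= 1 + r ->
      ext f (x - r) - r < ext g x /\ ext g x < ext f (x + r) + r).

Definition G_M (M : R) (f : R -> R) : Prop :=
  inE f /\ forall s, 0 <= s <= 1 -> s / M <= f s <= M * s.
Definition G_MT (M T : R) (f : R -> R) : Prop :=
  inE f /\ forall s, 0 <= s <= 1 ->
    s / M - 2 * Rpower T (- (2 / 3)) <= f s <= M * (s + 2 * Rpower T (- (2 / 3))).

Definition PL (n : nat) (f : R -> R) : Prop :=
  inE f /\
  (forall x, 0 <= x <= 1 ->
     filterlim f (within (fun y => 0 <= y <= 1) (locally x)) (locally (f x))) /\
  (forall i : nat, (i < n)%nat -> forall s,
     INR i / INR n <= s <= INR (S i) / INR n ->
     f s = f (INR i / INR n) + (s - INR i / INR n) * INR n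
            * (f (INR (S i) / INR n) - f (INR i / INR n))).

Definition Delta (n : nat) (fX fY gX gY : R -> R) : R :=
  fold_right Rmax 0
    (map (fun i => Rmax (Rabs (fX (INR i / INR n) - gX (INR i / INR n)))
                        (Rabs (fY (INR i / INR n) - gY (INR i / INR n))))
         (seq 0 (S n))).

Definition Gamma (M T : R) (fX fY : R -> R) (n : nat) (gX gY : R -> R) : Prop :=
  Delta n fX fY gX gY < 1 / (INR n ^ 2) /\
  Rbar_lt (levy fX gX) (1 / INR n) /\ Rbar_lt (levy fY gY) (1 / INR n) /\
  G_MT M T gX /\ G_MT M T gY.

Definition RXminus (a b : R) (F : (R -> R) -> (R -> R) -> Prop) (T : R) : Rbar :=
  Glb_Rbar (fun r => exists s gX gY, a <= s <= b /\ F gX gY /\ r = RX (T * gX s) (T * gY s)).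
Definition RXplus (a b : R) (F : (R -> R) -> (R -> R) -> Prop) (T : R) : Rbar :=
  Lub_Rbar (fun r => exists s gX gY, a <= s <= b /\ F gX gY /\ r = RX (T * gX s) (T * gY s)).
Definition xminus (s : R) (F : (R -> R) -> (R -> R) -> Prop) : R :=
  real (Glb_Rbar (fun r => exists gX gY, F gX gY /\ r = gX s)).
Definition xplus (s : R) (F : (R -> R) -> (R -> R) -> Prop) : R :=
  real (Lub_Rbar (fun r => exists gX gY, F gX gY /\ r = gX s)).

Definition EXplus (a b : R) (F : (R -> R) -> (R -> R) -> Prop) (T : R) : R :=
  let dm := xplus b F - xminus a F in
  let dp := xminus b F - xplus a F in
  match RXminus a b F T with
  | Finite rm =>
      if Rlt_dec dm (2 * rm * (b - a)) then (sqrt (2 * rm * (b - a)) - sqrt dm) ^ 2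
      else match RXplus a b F T with
           | Finite rp =>
               if Rlt_dec (2 * rp * (b - a)) dp then (sqrt (2 * rp * (b - a)) - sqrt dp) ^ 2
               else 0
           | _ => 0
           end
  | _ => match RXplus a b F T with
         | Finite rp =>
             if Rlt_dec (2 * rp * (b - a)) dp then (sqrt (2 * rp * (b - a)) - sqrt dp) ^ 2
             else 0
         | _ => 0
         end
  end.

(* On a cell I_j = [j/n, (j+1)/n] with j >= sqrt n both coordinates of f are affine, so
   f_X' is the constant slope n (f_X((j+1)/n) - f_X(j/n)) and the integrand is continuous.
   Every g in Gamma_{M,T}(f,n) is within 1/n^2 of f at the grid points, hence, being
   non-decreasing, stays in a thin band around f on I_j.  There, because
   R_X(X,Y) = max(1/2, (Y+1)/(X+1) - 1/2) and R^*_X(x,y) = max(1/2, y/x - 1/2), and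
   f >= s/M keeps f_X away from 0, the values R_X(T g(s)) are within
   w = O(M^3 (Delta_X + Delta_Y + 1/n^2 + 1/T) / (j/n)) of R^*_X(f(s)).  So the extremal
   quantities in E^+_X(I_j) are close to 2 R^*_X(f(s)) |I_j| and to Delta_X, and E^+_X, the
   squared gap between the intervals of their square roots, dominates
   |I_j| (sqrt(2 R^*_X(f(s))) - sqrt(f_X'(s)))^2 up to an error proportional to
   |I_j| + Delta_X + Delta_Y.  These errors telescope to O(M) times the cell rate
   M^3/n^(1/4) + M^2 n/sqrt T. *)

From Pilot Require Import Defs.
From Stdlib Require Import Reals Lra Lia List ZArith.
From Coquelicot Require Import Coquelicot.
Open Scope R_scope.

Lemma sqrt_le_of_le_sqr x y : 0 <= y -> x <= y ^ 2 -> sqrt x <= y.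
Proof. intros Hy Hx; rewrite <- (sqrt_pow2 y Hy); apply sqrt_le_1_alt; lra. Qed.

(* No sign condition on [b]: [sqrt] vanishes on negative numbers. *)
Lemma sqrt_le_add_of_le_sqr a b c : 0 <= c -> a <= b + c ^ 2 -> sqrt a <= sqrt b + c.
Proof.
  intros Hc Habc; pose proof (sqrt_pos b).
  apply sqrt_le_of_le_sqr; [lra|].
  destruct (Rle_or_lt 0 b) as [Hb|Hb].
  - pose proof (sqrt_sqrt b Hb); nra.
  - rewrite sqrt_neg_0 by lra; nra.
Qed.

Lemma sqr_le_sqr_add B X c : 0 <= B -> 0 <= X -> B - c <= X -> B ^ 2 <= X ^ 2 + 2 * B * c.
Proof. intros. destruct (Rle_or_lt B c); nra. Qed.

Lemma Rdiv_le_div A B C D : 0 <= A <= C -> 0 < D <= B -> A / B <= C / D.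
Proof.
  intros HA HD; unfold Rdiv.
  apply Rmult_le_compat; try lra.
  - apply Rlt_le, Rinv_0_lt_compat; lra.
  - apply Rinv_le_contravar; lra.
Qed.

Lemma Rabs_div_le A B C D : Rabs A <= C -> 0 < D <= B -> Rabs (A / B) <= C / D.
Proof.
  intros HA HD.
  rewrite Rabs_div, (Rabs_pos_eq B) by lra.
  apply Rdiv_le_div; [pose proof (Rabs_pos A)|]; lra.
Qed.

Lemma Rmax_l_lipschitz c u v : Rabs (Rmax c u - Rmax c v) <= Rabs (u - v).
Proof.
  unfold Rmax; destruct (Rle_dec c u), (Rle_dec c v);
    unfold Rabs; repeat destruct Rcase_abs; lra.
Qed.

Lemma sqr_sqrt_sub_scale h u v : 0 <= h ->
  h * (sqrt u - sqrt v) ^ 2 = (sqrt (h * u) - sqrt (h * v)) ^ 2.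
Proof.
  intros Hh; rewrite !sqrt_mult_alt by auto.
  replace ((sqrt h * sqrt u - sqrt h * sqrt v) ^ 2) with (sqrt h ^ 2 * (sqrt u - sqrt v) ^ 2)
    by ring.
  rewrite pow2_sqrt by auto; reflexivity.
Qed.

(** * Closed forms of R_X and R^*_X *)

Lemma Rmax_inv_mul_branch u (P : Prop) (dec : {P} + {~ P}) :
  0 < u -> (P <-> u <= 1) ->
  Rmax (/ u) u * (if dec then u / 2 else 1 - / u / 2) = Rmax (1 / 2) (u - 1 / 2).
Proof.
  intros Hu HP.
  destruct dec as [p|np].
  - assert (u <= 1) by tauto.
    assert (1 <= / u) by (rewrite <- Rinv_1; apply Rinv_le_contravar; lra).
    rewrite !Rmax_left by lra; field; lra.
  - assert (1 < u) by (destruct (Rle_or_lt u 1); tauto).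
    assert (/ u < 1) by (rewrite <- Rinv_1; apply Rinv_lt_contravar; lra).
    rewrite !Rmax_right by lra; field; lra.
Qed.

Lemma RX_eq_Rmax X Y : -1 < X -> -1 < Y -> RX X Y = Rmax (1 / 2) ((Y + 1) / (X + 1) - 1 / 2).
Proof.
  intros HX HY.
  assert (Hu : 0 < (Y + 1) / (X + 1)) by (apply Rdiv_lt_0_compat; lra).
  rewrite <- (Rmax_inv_mul_branch _ (Y <= X) (Rle_dec Y X) Hu).
  - unfold RX, Rr, Pp.
    replace ((X + 1) / (Y + 1)) with (/ ((Y + 1) / (X + 1))) by (field; lra).
    replace ((Y + 1) / (2 * (X + 1))) with ((Y + 1) / (X + 1) / 2) by (field; lra).
    replace ((X + 1) / (2 * (Y + 1))) with (/ ((Y + 1) / (X + 1)) / 2) by (field; lra).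
    reflexivity.
  - rewrite <- Rdiv_le_1 by lra; split; lra.
Qed.

Lemma RXstar_eq_Rmax x y : 0 < x -> 0 < y -> RXstar x y = Rmax (1 / 2) (y / x - 1 / 2).
Proof.
  intros Hx Hy.
  assert (Hu : 0 < y / x) by (apply Rdiv_lt_0_compat; lra).
  rewrite <- (Rmax_inv_mul_branch _ (y <= x) (Rle_dec y x) Hu).
  - unfold RXstar, Rstar, Pstar.
    destruct (Req_EM_T y 0); [lra|].
    destruct (Rlt_dec 0 x); [|lra].
    replace (x / y) with (/ (y / x)) by (field; lra).
    replace (y / (2 * x)) with (y / x / 2) by (field; lra).
    replace (x / (2 * y)) with (/ (y / x) / 2) by (field; lra).
    reflexivity.
  - rewrite <- Rdiv_le_1 by lra; tauto.
Qed.

Lemma shifted_ratio_error x y T : 0 < x -> 0 <= y -> 0 < T ->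
  Rabs ((T * y + 1) / (T * x + 1) - y / x) <= (1 + y / x) / (T * x).
Proof.
  intros Hx Hy HT.
  assert (HTx : 0 < T * x) by nra.
  replace ((T * y + 1) / (T * x + 1) - y / x) with ((x - y) / (x * (T * x + 1)))
    by (field; lra).
  replace ((1 + y / x) / (T * x)) with ((x + y) / (x * (T * x))) by (field; lra).
  apply Rabs_div_le; [unfold Rabs; destruct Rcase_abs|]; nra.
Qed.

Lemma ratio_error x y xs ys xl yu dx dy :
  0 < xl -> xl <= x -> xl <= xs -> 0 <= y <= yu ->
  Rabs (x - xs) <= dx -> Rabs (y - ys) <= dy ->
  Rabs (y / x - ys / xs) <= yu * dx / (xl * xl) + dy / xl.
Proof.
  intros Hl Hx Hxs Hy Hdx Hdy.
  replace (y / x - ys / xs) with (y * (x - xs) / (x * xs) * (-1) + (y - ys) / xs)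
    by (field; lra).
  eapply Rle_trans; [apply Rabs_triang|].
  apply Rplus_le_compat; [|apply Rabs_div_le; lra].
  rewrite Rabs_mult, Rabs_m1, Rmult_1_r.
  apply Rabs_div_le; [|nra].
  rewrite Rabs_mult, (Rabs_pos_eq y) by lra.
  apply Rmult_le_compat; try lra; apply Rabs_pos.
Qed.

Lemma RX_RXstar_error x y xs ys T xl yu dx dy :
  0 < T -> 0 < xl -> xl <= x -> xl <= xs -> 0 <= y <= yu -> 0 < ys ->
  Rabs (x - xs) <= dx -> Rabs (y - ys) <= dy ->
  Rabs (RX (T * x) (T * y) - RXstar xs ys)
    <= yu * dx / (xl * xl) + dy / xl + (1 + yu / xl) / (T * xl).
Proof.
  intros HT Hl Hx Hxs Hy Hys Hdx Hdy.
  rewrite RX_eq_Rmax, RXstar_eq_Rmax by nra.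
  eapply Rle_trans; [apply Rmax_l_lipschitz|].
  replace ((T * y + 1) / (T * x + 1) - 1 / 2 - (ys / xs - 1 / 2))
    with ((y / x - ys / xs) + ((T * y + 1) / (T * x + 1) - y / x)) by ring.
  eapply Rle_trans; [apply Rabs_triang|].
  apply Rplus_le_compat; [apply ratio_error; lra|].
  eapply Rle_trans; [apply shifted_ratio_error; lra|].
  apply Rdiv_le_div; [|nra].
  assert (y / x <= yu / xl) by (apply Rdiv_le_div; lra).
  assert (0 <= y / x) by (apply Rdiv_le_0_compat; lra).
  lra.
Qed.

(** * Lower bound for E^+_X *)

(* For [R1 <= R2] and [dp <= dm], [Egap R1 R2 dm dp] is the squared gap between the intervals
   [[sqrt R1, sqrt R2]] and [[sqrt dp, sqrt dm]]; [EXplus] is [Egap] of its extremal values. *)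
Definition Egap (R1 R2 dm dp : R) : R :=
  if Rlt_dec dm R1 then (sqrt R1 - sqrt dm) ^ 2
  else if Rlt_dec R2 dp then (sqrt R2 - sqrt dp) ^ 2 else 0.

Lemma EXplus_Egap a b F T rm rp :
  RXminus a b F T = Finite rm -> RXplus a b F T = Finite rp ->
  EXplus a b F T = Egap (2 * rm * (b - a)) (2 * rp * (b - a))
                        (xplus b F - xminus a F) (xminus b F - xplus a F).
Proof. intros Hm Hp; unfold EXplus; rewrite Hm, Hp; reflexivity. Qed.

Lemma Egap_nonneg R1 R2 dm dp : 0 <= Egap R1 R2 dm dp.
Proof.
  unfold Egap; destruct (Rlt_dec dm R1); [apply pow2_ge_0|].
  destruct (Rlt_dec R2 dp); [apply pow2_ge_0|lra].
Qed.

Lemma sqrt_Egap_ge R1 R2 dm dp : R1 <= R2 -> dp <= dm ->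
  sqrt R1 - sqrt dm <= sqrt (Egap R1 R2 dm dp) /\
  sqrt dp - sqrt R2 <= sqrt (Egap R1 R2 dm dp).
Proof.
  intros HR Hd.
  assert (Hsq : forall z, sqrt (z ^ 2) = Rabs z)
    by (intro; rewrite <- Rsqr_pow2; apply sqrt_Rsqr_abs).
  pose proof (sqrt_le_1_alt _ _ HR); pose proof (sqrt_le_1_alt _ _ Hd).
  pose proof (Rle_abs (sqrt R1 - sqrt dm)); pose proof (Rabs_maj2 (sqrt R1 - sqrt dm)).
  pose proof (Rle_abs (sqrt R2 - sqrt dp)); pose proof (Rabs_maj2 (sqrt R2 - sqrt dp)).
  unfold Egap; destruct (Rlt_dec dm R1) as [Hlt1|Hge1].
  - rewrite Hsq; lra.
  - pose proof (sqrt_le_1_alt R1 dm ltac:(lra)).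
    destruct (Rlt_dec R2 dp) as [Hlt2|Hge2].
    + rewrite Hsq; lra.
    + pose proof (sqrt_le_1_alt dp R2 ltac:(lra)); rewrite sqrt_0; lra.
Qed.

Lemma sqr_sqrt_sub_le_Egap u D R1 R2 dm dp cu cD :
  R1 <= R2 -> dp <= dm -> 0 <= cu + cD ->
  sqrt u <= sqrt R1 + cu -> sqrt R2 <= sqrt u + cu ->
  sqrt dm <= sqrt D + cD -> sqrt D <= sqrt dp + cD ->
  (sqrt u - sqrt D) ^ 2 <= Egap R1 R2 dm dp + 2 * (sqrt u + sqrt D) * (cu + cD).
Proof.
  intros HR Hd Hc Hu1 Hu2 HD1 HD2.
  destruct (sqrt_Egap_ge R1 R2 dm dp HR Hd) as [Hg1 Hg2].
  set (B := Rabs (sqrt u - sqrt D)).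
  assert (HB : B <= sqrt u + sqrt D).
  { pose proof (sqrt_pos u); pose proof (sqrt_pos D).
    unfold B, Rabs; destruct Rcase_abs; lra. }
  assert (HBgap : B - (cu + cD) <= sqrt (Egap R1 R2 dm dp))
    by (unfold B, Rabs; destruct Rcase_abs; lra).
  pose proof (sqr_le_sqr_add B _ _ (Rabs_pos _) (sqrt_pos _) HBgap) as Hsq.
  rewrite pow2_sqrt in Hsq by apply Egap_nonneg.
  unfold B in Hsq at 1; rewrite pow2_abs in Hsq.
  assert (2 * B * (cu + cD) <= 2 * (sqrt u + sqrt D) * (cu + cD))
    by (apply Rmult_le_compat_r; lra).
  lra.
Qed.

Lemma Glb_Rbar_finite (E : R -> Prop) lo e : (forall r, E r -> lo <= r) -> E e ->
  exists g, Glb_Rbar E = Finite g /\ lo <= g <= e.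
Proof.
  intros Hlo He; destruct (Glb_Rbar_correct E) as [Hlb Hglb].
  pose proof (Hlb e He) as Hle.
  assert (Hge : Rbar_le lo (Glb_Rbar E)) by (apply Hglb; intros x Hx; apply Hlo; auto).
  destruct (Glb_Rbar E) as [g| |]; simpl in *; try contradiction.
  exists g; auto.
Qed.

Lemma Lub_Rbar_finite (E : R -> Prop) hi e : (forall r, E r -> r <= hi) -> E e ->
  exists g, Lub_Rbar E = Finite g /\ e <= g <= hi.
Proof.
  intros Hhi He; destruct (Lub_Rbar_correct E) as [Hub Hlub].
  pose proof (Hub e He) as Hle.
  assert (Hge : Rbar_le (Lub_Rbar E) hi) by (apply Hlub; intros x Hx; apply Hhi; auto).
  destruct (Lub_Rbar E) as [g| |]; simpl in *; try contradiction.
  exists g; auto.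
Qed.

Section ExtremalValues.

Variables (F : (R -> R) -> (R -> R) -> Prop) (gX0 gY0 : R -> R).
Hypothesis HF : F gX0 gY0.

Lemma xminus_xplus_within s lo hi :
  (forall gX gY, F gX gY -> lo <= gX s <= hi) ->
  lo <= xminus s F /\ xminus s F <= xplus s F /\ xplus s F <= hi.
Proof.
  intros Hwithin.
  set (E := fun r => exists gX gY, F gX gY /\ r = gX s).
  assert (Hin : E (gX0 s)) by (exists gX0, gY0; auto).
  assert (Hbounds : forall r, E r -> lo <= r <= hi)
    by (intros r [gX [gY [HG ->]]]; apply (Hwithin gX gY HG)).
  destruct (Glb_Rbar_finite E lo _ (fun r Hr => proj1 (Hbounds r Hr)) Hin) as [g [Hg Hgb]].
  destruct (Lub_Rbar_finite E hi _ (fun r Hr => proj2 (Hbounds r Hr)) Hin) as [l [Hl Hlb]].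
  unfold xminus, xplus; fold E; rewrite Hg, Hl; simpl; lra.
Qed.

Lemma RXminus_RXplus_within a b T lo hi :
  a <= b -> (forall s gX gY, a <= s <= b -> F gX gY -> lo <= RX (T * gX s) (T * gY s) <= hi) ->
  exists rm rp, RXminus a b F T = Finite rm /\ RXplus a b F T = Finite rp /\
                lo <= rm /\ rm <= rp /\ rp <= hi.
Proof.
  intros Hab Hwithin.
  set (E := fun r => exists s gX gY, a <= s <= b /\ F gX gY /\ r = RX (T * gX s) (T * gY s)).
  assert (Hin : E (RX (T * gX0 a) (T * gY0 a))) by (exists a, gX0, gY0; repeat split; auto; lra).
  assert (Hbounds : forall r, E r -> lo <= r <= hi)
    by (intros r [s [gX [gY [Hs [HG ->]]]]]; apply (Hwithin s gX gY Hs HG)).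
  destruct (Glb_Rbar_finite E lo _ (fun r Hr => proj1 (Hbounds r Hr)) Hin) as [rm [Hm Hmb]].
  destruct (Lub_Rbar_finite E hi _ (fun r Hr => proj2 (Hbounds r Hr)) Hin) as [rp [Hp Hpb]].
  exists rm, rp; unfold RXminus, RXplus; fold E; rewrite Hm, Hp; repeat split; lra.
Qed.

Lemma EXplus_lower_bound a b T rho w x0 x1 eps cu cD :
  a <= b -> 0 <= cu -> 0 <= cD -> 2 * w * (b - a) <= cu ^ 2 -> 2 * eps <= cD ^ 2 ->
  (forall s gX gY, a <= s <= b -> F gX gY ->
     rho - w <= RX (T * gX s) (T * gY s) <= rho + w) ->
  (forall gX gY, F gX gY -> x0 - eps <= gX a <= x0 + eps /\ x1 - eps <= gX b <= x1 + eps) ->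
  (sqrt (2 * rho * (b - a)) - sqrt (x1 - x0)) ^ 2
    <= EXplus a b F T + 2 * (sqrt (2 * rho * (b - a)) + sqrt (x1 - x0)) * (cu + cD).
Proof.
  intros Hab Hcu HcD Hw Heps HRX Hends.
  destruct (RXminus_RXplus_within a b T _ _ Hab HRX) as [rm [rp [Hm [Hp Hr]]]].
  destruct (xminus_xplus_within a (x0 - eps) (x0 + eps)) as [Ha1 [Ha2 Ha3]];
    [intros gX gY HG; apply (Hends gX gY HG)|].
  destruct (xminus_xplus_within b (x1 - eps) (x1 + eps)) as [Hb1 [Hb2 Hb3]];
    [intros gX gY HG; apply (Hends gX gY HG)|].
  rewrite (EXplus_Egap a b F T rm rp Hm Hp).
  apply sqr_sqrt_sub_le_Egap.
  - apply Rmult_le_compat_r; lra.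
  - lra.
  - lra.
  - apply sqrt_le_add_of_le_sqr; nra.
  - apply sqrt_le_add_of_le_sqr; nra.
  - apply sqrt_le_add_of_le_sqr; lra.
  - apply sqrt_le_add_of_le_sqr; lra.
Qed.

End ExtremalValues.

(** * The neighbourhood Gamma *)

Lemma fold_Rmax_ge (phi : nat -> R) l i : In i l -> phi i <= fold_right Rmax 0 (map phi l).
Proof.
  induction l as [|x l IH]; simpl; [tauto|].
  intros [->|Hin]; [apply Rmax_l|].
  eapply Rle_trans; [apply IH; auto|apply Rmax_r].
Qed.

Lemma fold_Rmax_le (phi : nat -> R) l c : 0 <= c -> (forall i, In i l -> phi i <= c) ->
  fold_right Rmax 0 (map phi l) <= c.
Proof.
  intros Hc; induction l as [|x l IH]; simpl; intros Hphi; [lra|].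
  apply Rmax_lub; [apply Hphi; auto|apply IH; intros; apply Hphi; auto].
Qed.

(* [Defs.Delta] is qualified because [Reals] exports a discriminant named [Delta]. *)
Lemma Delta_ge (n : nat) (fX fY gX gY : R -> R) (i : nat) : (i <= n)%nat ->
  Rabs (fX (INR i / INR n) - gX (INR i / INR n)) <= Defs.Delta n fX fY gX gY /\
  Rabs (fY (INR i / INR n) - gY (INR i / INR n)) <= Defs.Delta n fX fY gX gY.
Proof.
  intros Hi.
  assert (Hin : In i (seq 0 (S n))) by (apply in_seq; lia).
  pose proof (fold_Rmax_ge (fun i => Rmax (Rabs (fX (INR i / INR n) - gX (INR i / INR n)))
                                          (Rabs (fY (INR i / INR n) - gY (INR i / INR n))))
                           _ i Hin) as Hmax.
  pose proof (Rmax_l (Rabs (fX (INR i / INR n) - gX (INR i / INR n)))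
                     (Rabs (fY (INR i / INR n) - gY (INR i / INR n)))).
  pose proof (Rmax_r (Rabs (fX (INR i / INR n) - gX (INR i / INR n)))
                     (Rabs (fY (INR i / INR n) - gY (INR i / INR n)))).
  unfold Defs.Delta; split; lra.
Qed.

Lemma Delta_refl_nonpos (n : nat) (fX fY : R -> R) : Defs.Delta n fX fY fX fY <= 0.
Proof.
  apply fold_Rmax_le; [lra|]; intros i _.
  rewrite !Rminus_diag, Rabs_R0, Rmax_left; lra.
Qed.

Lemma ext_nondecreasing f : inE f -> forall x y, x <= y -> ext f x <= ext f y.
Proof.
  intros [_ [Hmono _]] x y Hxy; unfold ext.
  destruct (Rlt_dec x 0), (Rlt_dec y 0), (Rlt_dec 1 x), (Rlt_dec 1 y);
    try lra; apply Hmono; lra.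
Qed.

Lemma levy_refl_lt f e : inE f -> 0 < e -> Rbar_lt (levy f f) e.
Proof.
  intros Hf He.
  apply Rbar_le_lt_trans with (e / 2); [|simpl; lra].
  apply Glb_Rbar_correct; split; [lra|].
  intros x _.
  pose proof (ext_nondecreasing f Hf (x - e / 2) x ltac:(lra)).
  pose proof (ext_nondecreasing f Hf x (x + e / 2) ltac:(lra)).
  lra.
Qed.

Lemma G_M_G_MT M T f : 0 < M -> 0 < T -> G_M M f -> G_MT M T f.
Proof.
  intros HM HT [Hf Hb]; split; [exact Hf|]; intros s Hs.
  assert (0 < Rpower T (- (2 / 3))) by apply exp_pos.
  specialize (Hb s Hs); nra.
Qed.

Lemma Gamma_refl M T (fX fY : R -> R) (n : nat) :
  (0 < n)%nat -> 0 < M -> 0 < T -> G_M M fX -> G_M M fY -> Gamma M T fX fY n fX fY.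
Proof.
  intros Hn HM HT HfX HfY.
  assert (Hpos : 0 < 1 / INR n) by (apply Rdiv_lt_0_compat; [lra|apply lt_0_INR; auto]).
  assert (0 < 1 / INR n ^ 2) by (apply Rdiv_lt_0_compat; [lra|apply pow_lt, lt_0_INR; auto]).
  pose proof (Delta_refl_nonpos n fX fY).
  split; [lra|].
  split; [apply levy_refl_lt; [apply HfX|lra]|].
  split; [apply levy_refl_lt; [apply HfY|lra]|].
  split; apply G_M_G_MT; auto.
Qed.

Lemma grid_point_in_unit (i n : nat) : (i <= n)%nat -> 0 <= INR i / INR n <= 1.
Proof.
  intros Hi; destruct (Nat.eq_0_gt_0_cases n) as [->|Hn].
  - rewrite INR_0; unfold Rdiv; rewrite Rinv_0, Rmult_0_r; lra.
  - apply lt_0_INR in Hn; apply le_INR in Hi; pose proof (pos_INR i).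
    split; [apply Rdiv_le_0_compat; lra|].
    apply Rle_div_l; lra.
Qed.

Lemma Gamma_grid_close M T (fX fY gX gY : R -> R) (n i : nat) :
  Gamma M T fX fY n gX gY -> (i <= n)%nat ->
  Rabs (gX (INR i / INR n) - fX (INR i / INR n)) <= 1 / INR n ^ 2 /\
  Rabs (gY (INR i / INR n) - fY (INR i / INR n)) <= 1 / INR n ^ 2.
Proof.
  intros [HD _] Hi.
  destruct (Delta_ge n fX fY gX gY i Hi).
  rewrite (Rabs_minus_sym (gX _)), (Rabs_minus_sym (gY _)); split; lra.
Qed.

Lemma Gamma_cell_band M T (fX fY gX gY : R -> R) (n j : nat) s :
  Gamma M T fX fY n gX gY -> (j < n)%nat ->
  INR j / INR n <= s <= INR (S j) / INR n ->
  fX (INR j / INR n) - 1 / INR n ^ 2 <= gX s <= fX (INR (S j) / INR n) + 1 / INR n ^ 2 /\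
  fY (INR j / INR n) - 1 / INR n ^ 2 <= gY s <= fY (INR (S j) / INR n) + 1 / INR n ^ 2.
Proof.
  intros HG Hj Hs.
  destruct (Gamma_grid_close M T fX fY gX gY n j HG ltac:(lia)) as [Ha1 Ha2].
  destruct (Gamma_grid_close M T fX fY gX gY n (S j) HG ltac:(lia)) as [Hb1 Hb2].
  destruct HG as [_ [_ [_ [[[_ [HmX _]] _] [[_ [HmY _]] _]]]]].
  pose proof (grid_point_in_unit j n ltac:(lia)).
  pose proof (grid_point_in_unit (S j) n ltac:(lia)).
  pose proof (HmX (INR j / INR n) s ltac:(lra) ltac:(lra) ltac:(lra)).
  pose proof (HmX s (INR (S j) / INR n) ltac:(lra) ltac:(lra) ltac:(lra)).
  pose proof (HmY (INR j / INR n) s ltac:(lra) ltac:(lra) ltac:(lra)).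
  pose proof (HmY s (INR (S j) / INR n) ltac:(lra) ltac:(lra) ltac:(lra)).
  apply Rabs_le_between' in Ha1, Ha2, Hb1, Hb2.
  split; split; lra.
Qed.

Lemma PL_on_cell (n : nat) f (j : nat) s : PL n f -> (j < n)%nat ->
  INR j / INR n <= s <= INR (S j) / INR n ->
  f s = f (INR j / INR n)
        + (s - INR j / INR n) * INR n * (f (INR (S j) / INR n) - f (INR j / INR n)).
Proof. intros [_ [_ Hlin]] Hj Hs; apply Hlin; auto. Qed.

Lemma Derive_PL (n : nat) f (j : nat) s : PL n f -> (j < n)%nat ->
  INR j / INR n < s < INR (S j) / INR n ->
  Derive f s = INR n * (f (INR (S j) / INR n) - f (INR j / INR n)).
Proof.
  intros Hf Hj Hs; apply is_derive_unique.
  apply is_derive_ext_loc with (fun t => f (INR j / INR n)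
    + (t - INR j / INR n) * INR n * (f (INR (S j) / INR n) - f (INR j / INR n))).
  - apply (locally_interval _ s (INR j / INR n) (INR (S j) / INR n)); try apply Hs.
    intros y Hy1 Hy2; symmetry; apply PL_on_cell; auto; simpl in *; lra.
  - set (c := f (INR (S j) / INR n) - f (INR j / INR n)); auto_derive; auto; ring.
Qed.

Lemma continuous_Rmax (f g : R -> R) x :
  continuous f x -> continuous g x -> continuous (fun y => Rmax (f y) (g y)) x.
Proof.
  intros Hf Hg.
  apply continuous_ext with (fun y => (f y + g y + Rabs (f y - g y)) / 2).
  { intros y; unfold Rmax, Rabs; destruct Rle_dec, Rcase_abs; lra. }
  apply (continuous_mult (fun y => f y + g y + Rabs (f y - g y)) (fun _ => / 2));
    [|apply continuous_const].
  apply (continuous_plus (fun y => f y + g y)); [apply (continuous_plus f g); auto|].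
  apply continuous_Rabs_comp, (continuous_plus f (fun y => - g y)); auto.
  apply (continuous_opp g); auto.
Qed.

Lemma continuous_cell_integrand x0 y0 kX kY a L z : 0 < x0 + (z - a) * kX ->
  continuous (fun s => (sqrt (2 * Rmax (1 / 2) ((y0 + (s - a) * kY) / (x0 + (s - a) * kX) - 1 / 2))
                        - sqrt L) ^ 2) z.
Proof.
  intros Hz.
  apply (continuous_comp (fun s => Rmax (1 / 2) ((y0 + (s - a) * kY) / (x0 + (s - a) * kX) - 1 / 2))
                         (fun u => (sqrt (2 * u) - sqrt L) ^ 2)).
  - apply continuous_Rmax; [apply continuous_const|].
    apply (@ex_derive_continuous R_AbsRing R_NormedModule); auto_derive; lra.
  - apply (@ex_derive_continuous R_AbsRing R_NormedModule); auto_derive.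
    pose proof (Rmax_l (1 / 2) ((y0 + (z - a) * kY) / (x0 + (z - a) * kX) - 1 / 2)); lra.
Qed.

Lemma RInt_le_of_continuous_on_open (F G : R -> R) a b c : a < b ->
  (forall s, a < s < b -> F s = G s) -> (forall s, a <= s <= b -> continuous G s) ->
  (forall s, a < s < b -> F s <= c) ->
  ex_RInt F a b /\ RInt F a b <= c * (b - a).
Proof.
  intros Hab HFG HG Hc.
  assert (HFG' : forall s, Rmin a b < s < Rmax a b -> G s = F s)
    by (rewrite Rmin_left, Rmax_right by lra; intros; symmetry; auto).
  assert (HexG : ex_RInt G a b).
  { apply (@ex_RInt_continuous R_CompleteNormedModule).
    rewrite Rmin_left, Rmax_right by lra; auto. }
  split; [apply (ex_RInt_ext G); auto|].
  rewrite (RInt_ext F G) by (intros; symmetry; auto).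
  apply Rle_trans with (RInt (fun _ => c) a b).
  - apply RInt_le; [lra|auto|apply ex_RInt_const|].
    intros s Hs; rewrite <- HFG by auto; auto.
  - rewrite RInt_const; apply Req_le; apply Rmult_comm.
Qed.

Lemma RInt_cells_le (F : R -> R) (t E phi : nat -> R) (k m : nat) : (k <= m)%nat ->
  (forall j, (k <= j <= m)%nat ->
     ex_RInt F (t j) (t (S j)) /\ RInt F (t j) (t (S j)) <= E j + (phi (S j) - phi j)) ->
  ex_RInt F (t k) (t (S m)) /\
  RInt F (t k) (t (S m)) <= sum_n_m E k m + (phi (S m) - phi k).
Proof.
  intros Hkm Hcell; induction Hkm as [|m Hkm IH].
  - rewrite sum_n_n; apply Hcell; lia.
  - destruct IH as [Hex Hle]; [intros; apply Hcell; lia|].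
    destruct (Hcell (S m)) as [Hex' Hle']; [lia|].
    split; [apply (ex_RInt_Chasles _ _ (t (S m))); auto|].
    rewrite <- (RInt_Chasles _ _ (t (S m))) by auto.
    rewrite sum_n_Sm by lia.
    change plus with Rplus.
    lra.
Qed.

(** * The estimate on one cell *)

Lemma RX_RXstar_cell_error M T a h x0 x1 y0 y1 x y xs ys :
  1 < M -> 0 < T -> 0 < h <= a -> 2 * M * h <= 1 ->
  a / M <= x0 <= x1 -> a / M <= y0 <= y1 -> y1 <= M * (a + h) ->
  x0 - h ^ 2 <= x <= x1 + h ^ 2 -> y0 - h ^ 2 <= y <= y1 + h ^ 2 ->
  x0 <= xs <= x1 -> y0 <= ys <= y1 ->
  Rabs (RX (T * x) (T * y) - RXstar xs ys)
    <= 14 * M ^ 3 * ((x1 - x0) + (y1 - y0) + 4 * h ^ 2 + / T) / a.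
Proof.
  intros HM HT Hh HMh Hx01 Hy01 Hy1 Hx Hy Hxs Hys.
  assert (Ha : 0 < a) by lra.
  assert (HaM : a / M = 2 * (a / (2 * M))) by (field; lra).
  assert (Hxl : 0 < a / (2 * M)) by (apply Rdiv_lt_0_compat; lra).
  assert (Hh2 : h ^ 2 <= a / (2 * M)).
  { apply (Rle_div_r (h ^ 2)); [lra|].
    assert (h * (2 * M * h) <= h * 1) by (apply Rmult_le_compat_l; lra).
    replace (h ^ 2 * (2 * M)) with (h * (2 * M * h)) by ring; lra. }
  assert (HaMa : a / M <= M * a)
    by (apply Rle_div_l; [lra|]; assert (1 <= M * M) by nra; nra).
  (* On the band [x >= a / (2 M)] and [0 <= y <= 3 M a]. *)
  eapply Rle_trans.
  { apply (RX_RXstar_error x y xs ys T (a / (2 * M)) (3 * M * a)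
             (x1 - x0 + 2 * h ^ 2) (y1 - y0 + 2 * h ^ 2));
      try apply Rabs_le_between'; nra. }
  replace (3 * M * a * (x1 - x0 + 2 * h ^ 2) / (a / (2 * M) * (a / (2 * M)))
           + (y1 - y0 + 2 * h ^ 2) / (a / (2 * M))
           + (1 + 3 * M * a / (a / (2 * M))) / (T * (a / (2 * M))))
    with ((12 * M ^ 3 * (x1 - x0 + 2 * h ^ 2) + 2 * M * (y1 - y0 + 2 * h ^ 2)
           + (2 * M + 12 * M ^ 3) / T) / a) by (field; lra).
  apply Rmult_le_compat_r; [apply Rlt_le, Rinv_0_lt_compat; lra|].
  assert (M <= M ^ 3) by nra.
  assert (0 < / T) by (apply Rinv_0_lt_compat; lra).
  unfold Rdiv; nra.
Qed.

Lemma cell_budget_sqr M T N r a h dX dY :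
  1 < M -> 1 < T -> 2 * M <= N -> 0 < r -> 0 < h -> h * N = 1 ->
  h * (r * r) <= a -> h <= a -> 0 <= dX -> 0 <= dY ->
  2 * (14 * M ^ 3 * (dX + dY + 4 * h ^ 2 + / T) / a) * h
    <= (8 * M ^ 2 * sqrt (h + dX + dY) / r + 6 * M * sqrt N / sqrt T) ^ 2.
Proof.
  intros HM HT HN Hr Hh HhN Hhr Hha HdX HdY.
  set (tau := h + dX + dY).
  assert (Hq1 : h / a <= 1) by (apply Rle_div_l; lra).
  assert (Hqr : h / a <= / (r * r)).
  { apply Rle_div_l; [lra|].
    replace (/ (r * r) * a) with (a / (r * r)) by (field; lra).
    apply (Rle_div_r h); nra. }
  assert (Hq0 : 0 <= h / a) by (apply Rdiv_le_0_compat; lra).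
  assert (H2h : 4 * h ^ 2 <= 2 * h) by nra.
  assert (HM3 : 0 < M ^ 3) by (apply pow_lt; lra).
  assert (HiT : 0 < / T) by (apply Rinv_0_lt_compat; lra).
  assert (Hirr : 0 < / (r * r)) by (apply Rinv_0_lt_compat; nra).
  replace (2 * (14 * M ^ 3 * (dX + dY + 4 * h ^ 2 + / T) / a) * h)
    with (28 * M ^ 3 * (dX + dY + 4 * h ^ 2) * (h / a) + 28 * M ^ 3 * (h / a) * / T)
    by (field; lra).
  assert (Hterm1 : 28 * M ^ 3 * (dX + dY + 4 * h ^ 2) * (h / a) <= 64 * M ^ 4 * tau * / (r * r)).
  { assert (Htau : 0 <= tau) by (unfold tau; lra).
    assert (M ^ 3 * tau <= M ^ 4 * tau) by (apply Rmult_le_compat_r; [lra|simpl; nra]).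
    assert (28 * M ^ 3 * (dX + dY + 4 * h ^ 2) <= 64 * M ^ 4 * tau)
      by (assert (dX + dY + 4 * h ^ 2 <= 2 * tau) by (unfold tau; lra); nra).
    apply Rmult_le_compat; nra. }
  assert (Hterm2 : 28 * M ^ 3 * (h / a) * / T <= 36 * M ^ 2 * N * / T).
  { apply Rmult_le_compat_r; [lra|]. nra. }
  assert (Hsq : forall z, 0 <= z -> sqrt z ^ 2 = z) by (intros; apply pow2_sqrt; auto).
  assert (Hp : (8 * M ^ 2 * sqrt tau / r) ^ 2 = 64 * M ^ 4 * tau * / (r * r)).
  { unfold Rdiv; rewrite !Rpow_mult_distr, Hsq by (unfold tau; lra).
    rewrite pow_inv; field; lra. }
  assert (Hp' : (6 * M * sqrt N / sqrt T) ^ 2 = 36 * M ^ 2 * N * / T).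
  { unfold Rdiv; rewrite !Rpow_mult_distr, !Hsq by lra.
    rewrite pow_inv, Hsq by lra; field; lra. }
  assert (0 <= 8 * M ^ 2 * sqrt tau / r).
  { apply Rdiv_le_0_compat; [apply Rmult_le_pos; [nra|apply sqrt_pos]|lra]. }
  assert (0 <= 6 * M * sqrt N / sqrt T).
  { apply Rdiv_le_0_compat; [apply Rmult_le_pos; [lra|apply sqrt_pos]|apply sqrt_lt_R0; lra]. }
  nra.
Qed.

Definition cell_rate (M T N r : R) : R := 60 * (M ^ 3 / r + M ^ 2 * N / sqrt T).

Lemma cell_budget M T N r h rho dX dY :
  1 < M -> 1 < T -> 0 < r -> 0 < h -> h * N = 1 -> h * (r * r) <= 1 ->
  0 <= dX -> 0 <= dY -> rho <= 2 * M ^ 2 ->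
  2 * (sqrt (2 * rho * h) + sqrt dX)
    * (8 * M ^ 2 * sqrt (h + dX + dY) / r + 6 * M * sqrt N / sqrt T + 2 * h)
  <= cell_rate M T N r * (h + dX + dY).
Proof.
  intros HM HT Hr Hh HhN Hhr HdX HdY Hrho; unfold cell_rate.
  set (tau := h + dX + dY).
  assert (Htau : 0 < tau) by (unfold tau; lra).
  set (st := sqrt tau).
  assert (Hst : st * st = tau) by (apply sqrt_sqrt; lra).
  assert (Hst0 : 0 <= st) by apply sqrt_pos.
  assert (HsT : 0 < sqrt T) by (apply sqrt_lt_R0; lra).
  assert (HN : 0 < N) by nra.
  assert (Hfirst : sqrt (2 * rho * h) + sqrt dX <= 3 * M * st).
  { assert (sqrt (2 * rho * h) <= 2 * M * st)
      by (apply sqrt_le_of_le_sqr; [nra|]; replace ((2 * M * st) ^ 2) with (4 * M ^ 2 * tau)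
          by (rewrite <- Hst; ring); unfold tau; nra).
    assert (sqrt dX <= st) by (apply sqrt_le_1_alt; unfold tau; lra).
    nra. }
  assert (Hh_st : h <= st / r).
  { apply (Rle_div_r h); [lra|].
    rewrite <- (sqrt_pow2 (h * r)) by nra.
    apply sqrt_le_1_alt; replace ((h * r) ^ 2) with (h * (h * (r * r))) by ring.
    unfold tau; nra. }
  assert (Hsecond : 8 * M ^ 2 * st / r + 6 * M * sqrt N / sqrt T + 2 * h
                    <= 10 * M ^ 2 * st / r + 6 * M * sqrt N / sqrt T).
  { assert (st / r <= M ^ 2 * st / r).
    { assert (1 <= M ^ 2) by (simpl; nra).
      unfold Rdiv; apply Rmult_le_compat_r; [apply Rlt_le, Rinv_0_lt_compat; lra|nra]. }
    unfold Rdiv in *; nra. }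
  assert (Hcross : st * sqrt N <= tau * N).
  { unfold st; rewrite <- sqrt_mult by lra.
    apply sqrt_le_of_le_sqr; [nra|].
    assert (1 <= tau * N) by (unfold tau; nra). nra. }
  assert (Hpos : 0 <= 6 * M * sqrt N / sqrt T)
    by (apply Rdiv_le_0_compat; [apply Rmult_le_pos; [lra|apply sqrt_pos]|lra]).
  assert (0 <= st / r) by (apply Rdiv_le_0_compat; lra).
  apply Rle_trans with (2 * (3 * M * st) * (10 * M ^ 2 * st / r + 6 * M * sqrt N / sqrt T)).
  { pose proof (sqrt_pos (2 * rho * h)); pose proof (sqrt_pos dX).
    apply Rmult_le_compat; lra. }
  replace (2 * (3 * M * st) * (10 * M ^ 2 * st / r + 6 * M * sqrt N / sqrt T))
    with (60 * M ^ 3 * (st * st) / r + 36 * M ^ 2 * (st * sqrt N) / sqrt T) by (field; lra).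
  replace (60 * (M ^ 3 / r + M ^ 2 * N / sqrt T) * tau)
    with (60 * M ^ 3 * tau / r + 60 * M ^ 2 * (tau * N) / sqrt T) by (field; lra).
  rewrite Hst; apply Rplus_le_compat_l, Rdiv_le_div; [|lra].
  assert (0 < M ^ 2) by (apply pow_lt; lra).
  assert (0 <= st * sqrt N) by (apply Rmult_le_pos; [lra|apply sqrt_pos]).
  split; [apply Rmult_le_pos; lra|].
  apply Rle_trans with (36 * M ^ 2 * (tau * N)); [apply Rmult_le_compat_l|]; nra.
Qed.

Definition rate_integrand (fX fY : R -> R) (s : R) : R :=
  (sqrt (2 * RXstar (fX s) (fY s)) - sqrt (Derive fX s)) ^ 2.

Section Cell.

Variables (M T r : R) (n j : nat) (fX fY : R -> R).
Hypotheses (HM : 1 < M) (HT : 1 < T) (HMn : 2 * M <= INR n)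
  (HPX : PL n fX) (HPY : PL n fY) (HGX : G_M M fX) (HGY : G_M M fY)
  (Hr : 0 < r) (Hrr : r * r = sqrt (INR n)) (Hj : sqrt (INR n) <= INR j) (Hjn : (j < n)%nat).

Let a := INR j / INR n.
Let b := INR (S j) / INR n.
Let h := / INR n.

Lemma cell_scales : 0 < h /\ h * INR n = 1 /\ b = a + h /\ h <= a /\ b <= 1 /\
  h * (r * r) <= a /\ h * (r * r) <= 1 /\ 2 * M * h <= 1.
Proof.
  assert (Hn : 0 < INR n) by lra.
  assert (Hsn : 1 <= sqrt (INR n)) by (rewrite <- sqrt_1; apply sqrt_le_1_alt; lra).
  assert (Hsnn : sqrt (INR n) <= INR n)
    by (rewrite <- (sqrt_square (INR n)) at 2 by lra; apply sqrt_le_1_alt; nra).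
  assert (HSj : INR (S j) <= INR n) by (apply le_INR; lia).
  rewrite S_INR in HSj.
  unfold a, b, h; rewrite S_INR; unfold Rdiv.
  assert (0 < / INR n) by (apply Rinv_0_lt_compat; lra).
  assert (Hdiv : forall x, x <= INR n -> x * / INR n <= 1).
  { intros x Hx; apply Rmult_le_reg_r with (INR n); [lra|].
    rewrite Rmult_assoc, Rinv_l; lra. }
  repeat split; try rewrite Rinv_l by lra; try field; try lra; try nra;
    rewrite ?(Rmult_comm (/ INR n)), ?Hrr; apply Hdiv; lra.
Qed.

Lemma cell_values f : G_M M f ->
  a / M <= f a /\ f b <= M * b /\ forall s, a <= s <= b -> f a <= f s <= f b.
Proof.
  intros [[_ [Hmono _]] Hbound].
  destruct cell_scales as (Hh & _ & Hb & Hha & Hb1 & _).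
  repeat split; try (apply Hbound; lra); apply Hmono; lra.
Qed.

Lemma grid_tolerance_eq : 1 / INR n ^ 2 = h ^ 2.
Proof. unfold h; field; apply not_0_INR; lia. Qed.

Let w := 14 * M ^ 3 * ((fX b - fX a) + (fY b - fY a) + 4 * h ^ 2 + / T) / a.

Lemma cell_RX_within s s' gX gY : a <= s <= b -> a <= s' <= b ->
  Gamma M T fX fY n gX gY ->
  RXstar (fX s) (fY s) - w <= RX (T * gX s') (T * gY s') <= RXstar (fX s) (fY s) + w.
Proof.
  intros Hs Hs' HG.
  destruct cell_scales as (Hh & _ & Hb & Hha & _ & _ & _ & HMh).
  destruct (cell_values fX HGX) as (HXa & HXb & HXs).
  destruct (cell_values fY HGY) as (HYa & HYb & HYs).
  destruct (Gamma_cell_band M T fX fY gX gY n j s' HG Hjn Hs') as [HgX HgY].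
  rewrite grid_tolerance_eq in HgX, HgY; fold a b in HgX, HgY.
  pose proof (HXs s Hs); pose proof (HYs s Hs).
  assert (fY b <= M * (a + h)) by (rewrite <- Hb; lra).
  apply Rabs_le_between', (RX_RXstar_cell_error M T a h); lra.
Qed.

Lemma cell_RXstar_le s : a <= s <= b -> RXstar (fX s) (fY s) <= 2 * M ^ 2.
Proof.
  intros Hs.
  destruct cell_scales as (Hh & _ & Hb & Hha & _).
  destruct (cell_values fX HGX) as (HXa & _ & HXs).
  destruct (cell_values fY HGY) as (HYa & HYb & HYs).
  pose proof (HXs s Hs); pose proof (HYs s Hs).
  assert (0 < a / M) by (apply Rdiv_lt_0_compat; lra).
  rewrite RXstar_eq_Rmax by lra.
  apply Rmax_lub; [simpl; nra|].
  assert (fY s / fX s <= M * b / (a / M)) by (apply Rdiv_le_div; lra).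
  replace (M * b / (a / M)) with (M ^ 2 * (1 + h / a)) in * by (rewrite Hb; field; lra).
  assert (h / a <= 1) by (apply Rle_div_l; lra).
  assert (0 < M ^ 2) by (apply pow_lt; lra).
  nra.
Qed.

Lemma cell_pointwise s : a < s < b ->
  h * rate_integrand fX fY s
  <= EXplus a b (Gamma M T fX fY n) T
     + cell_rate M T (INR n) r * (h + (fX b - fX a) + (fY b - fY a)).
Proof.
  intros Hs; unfold rate_integrand.
  destruct cell_scales as (Hh & HhN & Hb & Hha & Hb1 & Hhra & Hhr1 & HMh).
  destruct (cell_values fX HGX) as (HXa & HXb & HXs).
  destruct (cell_values fY HGY) as (HYa & HYb & HYs).
  pose proof (HXs b ltac:(lra)); pose proof (HYs b ltac:(lra)).
  pose proof (cell_RXstar_le s ltac:(lra)) as Hrho.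
  rewrite (Derive_PL n fX j s HPX Hjn Hs); fold a b.
  rewrite sqr_sqrt_sub_scale by lra.
  replace (h * (2 * RXstar (fX s) (fY s))) with (2 * RXstar (fX s) (fY s) * (b - a))
    by (rewrite Hb; ring).
  replace (h * (INR n * (fX b - fX a))) with (fX b - fX a)
    by (rewrite <- Rmult_assoc, HhN; ring).
  set (tau := h + (fX b - fX a) + (fY b - fY a)).
  eapply Rle_trans.
  { apply (EXplus_lower_bound _ fX fY
      (Gamma_refl M T fX fY n ltac:(lia) ltac:(lra) ltac:(lra) HGX HGY)
      a b T (RXstar (fX s) (fY s)) w (fX a) (fX b) (h ^ 2)
      (8 * M ^ 2 * sqrt tau / r + 6 * M * sqrt (INR n) / sqrt T) (2 * h)); try lra.
    - assert (0 <= sqrt tau) by apply sqrt_pos.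
      assert (0 < sqrt T) by (apply sqrt_lt_R0; lra).
      pose proof (sqrt_pos (INR n)).
      apply Rplus_le_le_0_compat; apply Rdiv_le_0_compat; nra.
    - unfold w; replace (b - a) with h by lra.
      apply cell_budget_sqr; lra.
    - nra.
    - intros s' gX gY Hs' HG; apply cell_RX_within; auto; lra.
    - intros gX gY HG.
      destruct (Gamma_grid_close M T fX fY gX gY n j HG ltac:(lia)) as [Ha _].
      destruct (Gamma_grid_close M T fX fY gX gY n (S j) HG ltac:(lia)) as [Hb' _].
      rewrite grid_tolerance_eq in Ha, Hb'; fold a b in Ha, Hb'.
      split; apply Rabs_le_between'; auto. }
  apply Rplus_le_compat_l; replace (b - a) with h by lra.
  apply cell_budget; lra.
Qed.

Lemma cell_integral :
  ex_RInt (rate_integrand fX fY) (INR j / INR n) (INR (S j) / INR n) /\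
  RInt (rate_integrand fX fY) (INR j / INR n) (INR (S j) / INR n)
  <= EXplus (INR j / INR n) (INR (S j) / INR n) (Gamma M T fX fY n) T
     + cell_rate M T (INR n) r
       * ((INR (S j) / INR n - INR j / INR n)
          + (fX (INR (S j) / INR n) - fX (INR j / INR n))
          + (fY (INR (S j) / INR n) - fY (INR j / INR n))).
Proof.
  fold a b.
  destruct cell_scales as (Hh & HhN & Hb & Hha & Hb1 & _).
  destruct (cell_values fX HGX) as (HXa & HXb & HXs).
  destruct (cell_values fY HGY) as (HYa & HYb & HYs).
  pose proof (HXs b ltac:(lra)); pose proof (HYs b ltac:(lra)).
  assert (0 < a / M) by (apply Rdiv_lt_0_compat; lra).
  set (kX := INR n * (fX b - fX a)); set (kY := INR n * (fY b - fY a)).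
  assert (0 <= kX) by (apply Rmult_le_pos; lra).
  replace (b - a) with h by lra.
  set (bound := EXplus a b (Gamma M T fX fY n) T
                + cell_rate M T (INR n) r * (h + (fX b - fX a) + (fY b - fY a))).
  replace bound with ((INR n * bound) * (b - a)) by (rewrite Hb; unfold h; field; lra).
  (* On the open cell [fX], [fY] are affine, so the integrand is a continuous function of [s]. *)
  apply RInt_le_of_continuous_on_open with
    (fun s => (sqrt (2 * Rmax (1 / 2) ((fY a + (s - a) * kY) / (fX a + (s - a) * kX) - 1 / 2))
               - sqrt kX) ^ 2); [lra|..].
  - intros s Hs; unfold rate_integrand.
    assert (Hs' : a <= s <= b) by lra.
    rewrite (Derive_PL n fX j s HPX Hjn Hs); fold a b kX.
    pose proof (HXs s Hs'); pose proof (HYs s Hs').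
    rewrite RXstar_eq_Rmax by lra.
    rewrite (PL_on_cell n fX j s HPX Hjn Hs'), (PL_on_cell n fY j s HPY Hjn Hs'); fold a b.
    replace ((s - a) * INR n * (fX b - fX a)) with ((s - a) * kX) by (unfold kX; ring).
    replace ((s - a) * INR n * (fY b - fY a)) with ((s - a) * kY) by (unfold kY; ring).
    reflexivity.
  - intros z Hz; apply continuous_cell_integrand.
    assert (0 <= (z - a) * kX) by (apply Rmult_le_pos; lra); lra.
  - intros s Hs.
    pose proof (cell_pointwise s Hs) as Hpt; fold bound in Hpt.
    apply (Rmult_le_reg_l h); [lra|].
    rewrite <- Rmult_assoc, (Rmult_comm h), HhN, Rmult_1_l, Rmult_comm; exact Hpt.
Qed.

End Cell.

(** * Summation over the cells *)

Lemma INR_cel_ge x : 0 < x -> x <= INR (cel x).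
Proof.
  intros Hx; unfold cel; destruct (base_Int_part (- x)) as [Hlow _].
  assert (Hz : (0 <= - Int_part (- x))%Z) by (apply le_IZR; rewrite opp_IZR; lra).
  rewrite INR_IZR_INZ, Z2Nat.id, opp_IZR by exact Hz; lra.
Qed.

Lemma INR_flr_le y : 0 <= y -> INR (flr y) <= y.
Proof.
  intros Hy; unfold flr; destruct (base_Int_part y) as [Hlow Hup].
  assert (Hz : (0 <= Int_part y)%Z).
  { assert (Hm1 : IZR (-1) < IZR (Int_part y)) by (simpl; lra).
    apply lt_IZR in Hm1; lia. }
  rewrite INR_IZR_INZ, Z2Nat.id by exact Hz; exact Hlow.
Qed.

Lemma Rpower_quarter_sqr x : 0 < x -> Rpower x (1 / 4) * Rpower x (1 / 4) = sqrt x.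
Proof.
  intros Hx; rewrite <- Rpower_plus, <- Rpower_sqrt by exact Hx; f_equal; field.
Qed.

Lemma G_M_grid_increment M f (n k m : nat) : 0 < M -> G_M M f -> (k <= m <= n)%nat ->
  f (INR m / INR n) - f (INR k / INR n) <= M.
Proof.
  intros HM [_ Hb] Hkm.
  pose proof (grid_point_in_unit k n ltac:(lia)) as Hk.
  pose proof (grid_point_in_unit m n ltac:(lia)) as Hm.
  pose proof (Hb _ Hk); pose proof (Hb _ Hm).
  assert (0 <= INR k / INR n / M) by (apply Rdiv_le_0_compat; lra).
  nra.
Qed.

Lemma cell_rate_nonneg M T N r : 0 < M -> 0 < T -> 0 <= N -> 0 < r -> 0 <= cell_rate M T N r.
Proof.
  intros HM HT HN Hr; unfold cell_rate.
  assert (0 < sqrt T) by (apply sqrt_lt_R0; lra).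
  assert (0 <= M ^ 3 / r) by (apply Rdiv_le_0_compat; [apply pow_le|]; lra).
  assert (0 <= M ^ 2 * N / sqrt T)
    by (apply Rdiv_le_0_compat; [apply Rmult_le_pos; [apply pow_le|]|]; lra).
  lra.
Qed.

Lemma RInt_rate_le_EXplus_sum M T r (n k m : nat) fX fY :
  1 < M -> 1 < T -> 2 * M <= INR n -> PL n fX -> PL n fY -> G_M M fX -> G_M M fY ->
  0 < r -> r * r = sqrt (INR n) -> sqrt (INR n) <= INR k -> (k <= m - 1)%nat -> (m <= n)%nat ->
  RInt (rate_integrand fX fY) (INR k / INR n) (INR m / INR n)
  <= sum_n_m (fun j => EXplus (INR j / INR n) (INR (S j) / INR n) (Gamma M T fX fY n) T)
             k (m - 1)
     + 3 * M * cell_rate M T (INR n) r.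
Proof.
  intros HM HT HMn HPX HPY HGX HGY Hr Hrr Hsk Hkm Hmn.
  assert (Hk1 : (1 <= k)%nat).
  { apply INR_le; eapply Rle_trans; [|exact Hsk].
    simpl; rewrite <- sqrt_1; apply sqrt_le_1_alt; lra. }
  set (K := cell_rate M T (INR n) r).
  (* The error of cell [j] is the increment of [phi] across it, so the errors telescope. *)
  set (phi := fun i : nat => K * (INR i / INR n + fX (INR i / INR n) + fY (INR i / INR n))).
  destruct (RInt_cells_le (rate_integrand fX fY) (fun i => INR i / INR n)
              (fun j => EXplus (INR j / INR n) (INR (S j) / INR n) (Gamma M T fX fY n) T)
              phi k (m - 1) Hkm) as [_ Hint].
  { intros j Hj.
    destruct (cell_integral M T r n j fX fY) as [Hex Hle]; auto; try lia.
    - eapply Rle_trans; [exact Hsk|apply le_INR; lia].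
    - split; [exact Hex|]; eapply Rle_trans; [exact Hle|]; right; unfold phi, K; ring. }
  replace (S (m - 1)) with m in Hint by lia.
  assert (phi m - phi k <= K * (3 * M)).
  { pose proof (G_M_grid_increment M fX n k m ltac:(lra) HGX ltac:(lia)).
    pose proof (G_M_grid_increment M fY n k m ltac:(lra) HGY ltac:(lia)).
    pose proof (grid_point_in_unit k n ltac:(lia)); pose proof (grid_point_in_unit m n ltac:(lia)).
    unfold phi; rewrite <- Rmult_minus_distr_l.
    apply Rmult_le_compat_l; [apply cell_rate_nonneg|]; lra. }
  lra.
Qed.

Theorem proposition2p4 :
  exists C : R, forall (theta M T : R) (n : nat) (fX fY : R -> R) (k : nat),
    0 < theta <= 1 -> 1 < M -> 1 < T -> 2 * M <= INR n ->
    PL n fX -> PL n fY -> G_M M fX -> G_M M fY ->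
    (cel (sqrt (INR n)) <= k)%nat -> (k <= flr (theta * INR n) - 1)%nat ->
    sum_n_m (fun j : nat =>
               EXplus (INR j / INR n) (INR (S j) / INR n) (Gamma M T fX fY n) T)
            k (flr (theta * INR n) - 1)
    >= RInt (fun s => (sqrt (2 * RXstar (fX s) (fY s)) - sqrt (Derive fX s)) ^ 2)
            (INR k / INR n) (INR (flr (theta * INR n)) / INR n)
       - C * (M ^ 4 / Rpower (INR n) (1 / 4) + M ^ 3 * INR n / sqrt T).
Proof.
  exists 180; intros theta M T n fX fY k Hth HM HT HMn HPX HPY HGX HGY Hk Hkm.
  set (m := flr (theta * INR n)) in *.
  set (r := Rpower (INR n) (1 / 4)).
  assert (Hr : 0 < r) by apply exp_pos.
  assert (Hsk : sqrt (INR n) <= INR k).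
  { eapply Rle_trans; [apply INR_cel_ge|apply le_INR, Hk].
    rewrite <- sqrt_0; apply sqrt_lt_1_alt; lra. }
  assert (Hmn : (m <= n)%nat).
  { apply INR_le; eapply Rle_trans; [apply INR_flr_le; nra|]; nra. }
  pose proof (RInt_rate_le_EXplus_sum M T r n k m fX fY HM HT HMn HPX HPY HGX HGY Hr
                (Rpower_quarter_sqr (INR n) ltac:(lra)) Hsk Hkm Hmn) as Hsum.
  replace (3 * M * cell_rate M T (INR n) r)
    with (180 * (M ^ 4 / r + M ^ 3 * INR n / sqrt T)) in Hsum
    by (unfold cell_rate; field; split; [apply Rgt_not_eq, sqrt_lt_R0|]; lra).
  unfold rate_integrand in Hsum; lra.
Qed.
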